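(* Let $a,b\geq 2$ be integers. For any integers $m\geq a+3$ and $n\geq b+3$ there exist regular erasure patterns $\mathcal{E}\subseteq[m]\times[n]$ that are not correctable in the topology $T_{m\times n}(a,b,0)$.
   Context: Positions of vectors in $\mathbb{F}^{mn}$ are identified with $[m]\times[n]$, $[k]=\{1,\dots,k\}$. For linear codes $\mathcal{C}_1\subseteq\mathbb{F}^m,\mathcal{C}_2\subseteq\mathbb{F}^n$, $\mathcal{C}_1\otimes\mathcal{C}_2$ is the row span of the Kronecker product of their generator matrices. A code for the topology $T_{m\times n}(a,b,0)$ is a linear code over a finite field $\mathbb{F}$ whose parity-check matrix is a parity-check matrix of $\mathcal{C}_{\mathsf{col}}\otimes\mathcal{C}_{\mathsf{row}}$, where $\mathcal{C}_{\mathsf{col}}$ is a linear $[m,\geq m-a]$ code and $\mathcal{C}_{\mathsf{row}}$ a linear $[n,\geq n-b]$ code over $\mathbb{F}$; $\mathbb{C}_{m\times n}(a,b,0)$ is the set of these codes (over any finite field). A code corrects an erasure pattern $\mathcal{E}$ if no two distinct codewords agree on all positions outside $\mathcal{E}$; $\mathcal{E}$ is correctable in $T_{m\times n}(a,b,0)$ if some code in $\mathbb{C}_{m\times n}(a,b,0)$ corrects it. An erasure pattern $\mathcal{E}\subseteq[m]\times[n]$ is regular (for $T_{m\times n}(a,b,0)$) if for all $\mathcal{U}\subseteq[m]$ with $|\mathcal{U}|=u\geq a$ and all $\mathcal{V}\subseteq[n]$ with $|\mathcal{V}|=v\geq b$ one has $|\mathcal{E}\cap(\mathcal{U}\times\mathcal{V})|\leq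 va+ub-ab$. *)

From mathcomp Require Import all_boot all_order all_algebra.
From mathcomp Require Import mxtens.
Set Implicit Arguments. Unset Strict Implicit. Unset Printing Implicit Defensive.
Import GRing.Theory.
Local Open Scope ring_scope.

(* Positions of vectors in F^(m*n) are identified with 'I_m * 'I_n via
   mxtens_index (i, j) = i * n + j, the indexing used by the Kronecker
   product tensmx (A *t B). *)

(* The product code C_col (x) C_row: the row span of the Kronecker product
   of generator matrices G1 : 'M_(k1, m), G2 : 'M_(k2, n). A vector
   c : 'rV_(m*n) is a codeword iff (c <= G1 *t G2)%MS. *)
Definition tensor_gen (F : fieldType) (k1 m k2 n : nat)
  (G1 : 'M[F]_(k1, m)) (G2 : 'M[F]_(k2, n)) : 'M[F]_(k1 * k2, m * n) :=
  tensmx G1 G2.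

Definition corrects (F : fieldType) (k m n : nat) (G : 'M[F]_(k, m * n))
  (E : {set 'I_m * 'I_n}) : Prop :=
  forall c1 c2 : 'rV[F]_(m * n),
    (c1 <= G)%MS -> (c2 <= G)%MS ->
    (forall (i : 'I_m) (j : 'I_n), (i, j) \notin E ->
        c1 0 (mxtens_index (i, j)) = c2 0 (mxtens_index (i, j))) ->
    c1 = c2.

(* E is correctable in T_{m x n}(a,b,0): some finite field F and some
   C_col = rowspace G1 (an [m, >= m-a] code) and C_row = rowspace G2
   (an [n, >= n-b] code) are such that C_col (x) C_row corrects E. *)
Definition correctable (m n a b : nat) (E : {set 'I_m * 'I_n}) : Prop :=
  exists (F : finFieldType) (k1 k2 : nat)
         (G1 : 'M[F]_(k1, m)) (G2 : 'M[F]_(k2, n)),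
    [/\ (m - a <= \rank G1)%N, (n - b <= \rank G2)%N
      & corrects (tensor_gen G1 G2) E].

Definition regular (m n a b : nat) (E : {set 'I_m * 'I_n}) : Prop :=
  forall (U : {set 'I_m}) (V : {set 'I_n}),
    (a <= #|U|)%N -> (b <= #|V|)%N ->
    (#|E :&: setX U V| <= #|V| * a + #|U| * b - a * b)%N.

From mathcomp Require Import all_boot all_order all_algebra mxtens.
From mathcomp Require Import zify ring.

(* The pattern is a 5 x 5 core, regular but not correctable for a = b = 2,
   padded with a - 2 full rows and b - 2 full columns.  Regularity reduces,
   once the full rows and columns are split off, to an exhaustive check on the
   core.  For non-correctability, a code of dimension at least m - a contains a
   nonzero codeword vanishing on any m - a - 1 prescribed coordinates; tensor
   products of such codewords, chosen to vanish on the rows and columns beyond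
   the padding and on a few lines of the core, give a nonzero codeword of
   C_col (x) C_row supported in the pattern, possibly after a linear
   combination of two of them cancelling the centre cell (2, 2) of the core. *)
Set Implicit Arguments. Unset Strict Implicit. Unset Printing Implicit Defensive.
Import GRing.Theory.

Lemma card_ord_le_size m (A : {pred 'I_m}) (s : seq nat) :
  {in A, forall i : 'I_m, val i \in s} -> #|A| <= size s.
Proof.
move=> As; rewrite cardE -(size_map val); apply: uniq_leq_size.
  by rewrite (map_inj_uniq val_inj) enum_uniq.
by move=> j /mapP[i]; rewrite mem_enum => /As si ->.
Qed.

Definition band m (lo hi : nat) : {set 'I_m} := [set i : 'I_m | lo <= i < hi].

Lemma card_band m lo hi : #|band m lo hi| <= hi - lo.
Proof.
rewrite -(size_iota lo (hi - lo)); apply: card_ord_le_size => i.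
by rewrite !inE mem_iota /=; lia.
Qed.

Definition listed_or_beyond m (s : seq nat) (t : nat) : {set 'I_m} :=
  [set i : 'I_m | (val i \in s) || (t <= i)].

Lemma card_listed_or_beyond m s t : #|listed_or_beyond m s t| <= size s + (m - t).
Proof.
rewrite -(size_iota t (m - t)) -size_cat; apply: card_ord_le_size => i.
by rewrite !inE mem_cat mem_iota /=; have := ltn_ord i; lia.
Qed.

Lemma card_preimset_le (T T' : finType) (f : T -> T') (A : {set T'}) :
  injective f -> #|f @^-1: A| <= #|A|.
Proof.
move=> f_inj; rewrite -(card_imset _ f_inj); apply: subset_leq_card.
by apply/subsetP=> y /imsetP[x]; rewrite inE => fx ->.
Qed.

(* The slack is (a - k - 2) (x - 2) + (k + w - a) (b - l - 2). *)
Lemma regular_slack a b k w l x :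
  2 <= a -> 2 <= b -> k <= a - 2 -> l <= b - 2 -> a <= k + w -> b <= l + x ->
  k * (l + x) + w * l + (2 * w + 2 * x - 4) <= (l + x) * a + (k + w) * b - a * b.
Proof.
move=> a2 b2 ka lb aw bx.
have [s ?] : exists s, a = k + 2 + s by exists (a - k - 2); lia.
have [t ?] : exists t, b = l + 2 + t by exists (b - l - 2); lia.
have [p ?] : exists p, w = 2 + s + p by exists (w - 2 - s); lia.
have [q ?] : exists q, x = 2 + t + q by exists (x - 2 - t); lia.
subst a b w x.
rewrite (_ : 2 * _ + 2 * _ - 4 = 2 * (s + p) + 2 * (t + q) + 4); last by lia.
set lhs := (X in X <= _).
have -> : (l + (2 + t + q)) * (k + 2 + s) + (k + (2 + s + p)) * (l + 2 + t) =
  (k + 2 + s) * (l + 2 + t) + lhs + (s * t + s * q + p * t) by rewrite /lhs; ring.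
lia.
Qed.

(* The pattern is the core below, in the top-left 5 x 5 block, together with
   the a - 2 full rows and b - 2 full columns that follow it:
     X X X . .
     X X X . .
     X X . X X
     . . X X X
     . . X X X                                                                *)
Definition core (i j : nat) : bool :=
  [|| (i < 2) && (j < 3), (i == 2) && (j != 2) | (3 <= i) && (2 <= j)].

Definition core_set : {set 'I_5 * 'I_5} := [set p : 'I_5 * 'I_5 | core p.1 p.2].

Lemma core_bound (U V : {set 'I_5}) u v :
  #|U| <= u -> #|V| <= v -> 2 <= u -> 2 <= v ->
  #|setX U V :&: core_set| <= 2 * u + 2 * v - 4.
Proof.
suff: #|setX U V :&: core_set| <= 2 * maxn #|U| 2 + 2 * maxn #|V| 2 - 4 by lia.
have card_sum (T : finType) (A : {set T}) : #|A| = \sum_(i : T) (i \in A : nat).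
  by rewrite -sum1_card big_mkcond; apply: eq_bigr => i _; case: (i \in A).
have -> : #|setX U V :&: core_set| =
    \sum_(i < 5) \sum_(j < 5) ((i \in U) && (j \in V) && core i j : nat).
  by rewrite card_sum pair_bigA; apply: eq_bigr => -[i j] _; rewrite !inE.
rewrite !card_sum !big_ord_recl !big_ord0.
by repeat match goal with |- context [in_mem ?x ?M] => case: (in_mem x M) end.
Qed.

Definition in_pattern (a b i j : nat) : bool :=
  [|| 5 <= i < a + 3, 5 <= j < b + 3 | [&& i < 5, j < 5 & core i j]].

Definition pattern (a b m n : nat) : {set 'I_m * 'I_n} :=
  [set p : 'I_m * 'I_n | in_pattern a b p.1 p.2].

Lemma notin_pattern a b m n (i : 'I_m) (j : 'I_n) :
  (i, j) \notin pattern a b m n ->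
  [/\ (i \in listed_or_beyond m [:: 2; 2] (a + 3))
      || (j \in listed_or_beyond n [:: 0; 1; 3; 4] (b + 3)),
    ~~ ((val i == 2) && (val j == 2)) ->
      (i \in listed_or_beyond m [:: 3; 4] (a + 3))
      || (j \in listed_or_beyond n [:: 3; 4] (b + 3))
  & ~~ ((val i == 2) && (val j == 2)) ->
      (i \in listed_or_beyond m [:: 0; 1] (a + 3))
      || (j \in listed_or_beyond n [:: 0; 1] (b + 3))].
Proof. by rewrite !inE /in_pattern /core /= => ?; split=> [|?|?]; lia. Qed.

Section Regularity.

Variables (a b m n : nat).
Hypotheses (a2 : 2 <= a) (b2 : 2 <= b) (am : a + 3 <= m) (bn : b + 3 <= n).

Fact leq5m : 5 <= m. Proof. lia. Qed.
Fact leq5n : 5 <= n. Proof. lia. Qed.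

Let R := band m 5 (a + 3).
Let C := band n 5 (b + 3).
Let top_row := widen_ord leq5m.
Let left_col := widen_ord leq5n.

Lemma pattern_cover (U : {set 'I_m}) (V : {set 'I_n}) :
  pattern a b m n :&: setX U V \subset
    setX (U :&: R) V :|: setX (U :\: R) (V :&: C)
    :|: [set (top_row p.1, left_col p.2) | p in
           setX (top_row @^-1: (U :\: R)) (left_col @^-1: (V :\: C)) :&: core_set].
Proof.
apply/subsetP => -[i j]; rewrite !inE /= /in_pattern => /andP[Eij /andP[Ui Vj]].
rewrite Ui Vj /=; case: (boolP (5 <= i < a + 3)) => //= iR.
case: (boolP (5 <= j < b + 3)) => //= jC.
move: Eij; rewrite (negPf iR) (negPf jC) /= => /and3P[i5 j5 core_ij].
have wi : top_row (Ordinal i5) = i by apply: val_inj.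
have wj : left_col (Ordinal j5) = j by apply: val_inj.
apply/imsetP; exists (Ordinal i5, Ordinal j5); last by rewrite wi wj.
by rewrite !inE /= wi wj Ui Vj iR jC.
Qed.

Lemma pattern_regular : regular a b (pattern a b m n).
Proof.
move=> U V aU bV; apply: leq_trans (subset_leq_card (pattern_cover U V)) _.
have top_row_inj : injective top_row by move=> i i' /(congr1 val)/=/val_inj.
have left_col_inj : injective left_col by move=> j j' /(congr1 val)/=/val_inj.
have UR : #|U :&: R| <= a - 2.
  have : #|R| <= a + 3 - 5 := card_band _ _ _.
  have := subset_leq_card (subsetIr U R); lia.
have VC : #|V :&: C| <= b - 2.
  have : #|C| <= b + 3 - 5 := card_band _ _ _.
  have := subset_leq_card (subsetIr V C); lia.
rewrite -(cardsID R U) -(cardsID C V) in aU bV *.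
have core_part := core_bound (card_preimset_le (U :\: R) top_row_inj)
  (card_preimset_le (V :\: C) left_col_inj).
apply: leq_trans (leq_card_setU _ _) _.
apply: leq_trans (leq_add (leq_card_setU _ _) (leq_imset_card _ _)) _.
rewrite !cardsX -(cardsID C V).
apply: leq_trans (regular_slack a2 b2 UR VC aU bV); rewrite leq_add2l.
by apply: core_part; lia.
Qed.

End Regularity.

Local Open Scope ring_scope.

Section Codewords.

Variable F : fieldType.

Lemma row_neq0P N (x : 'rV[F]_N) : reflect (exists i, x 0 i != 0) (x != 0).
Proof.
apply: (iffP idP) => [x0 | [i]]; last by apply: contraNneq => ->; rewrite mxE.
apply/existsP; apply: contraR x0 => /existsPn x0.
by apply/eqP/rowP => i; rewrite mxE; apply/eqP/negPn.
Qed.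

Lemma exists_codeword_vanishing_on k N (G : 'M[F]_(k, N)) (Z : {set 'I_N}) :
  (#|Z| < \rank G)%N ->
  exists x : 'rV[F]_N, [/\ x != 0, (x <= G)%MS & {in Z, forall i, x 0 i = 0}].
Proof.
move=> ZG.
pose P := \matrix_(i < N, j < #|Z|) (i == enum_val j)%:R : 'M[F]_(N, #|Z|).
have rkGK : (0 < \rank (G :&: kermx P))%N.
  have := mxrank_sum_cap G (kermx P); rewrite mxrank_ker.
  have := rank_leq_col (G + kermx P)%MS; have := rank_leq_col P; lia.
have /rowV0Pn[x xGK x0] : (G :&: kermx P)%MS != 0 by rewrite -mxrank_eq0 -lt0n.
exists x; split => //; first exact: submx_trans xGK (capmxSl _ _).
move=> i iZ; have /sub_kermxP/matrixP/(_ 0 (enum_rank_in iZ i)) :=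
  submx_trans xGK (capmxSr _ _).
rewrite !mxE (bigD1 i) //= big1 => [|l /negPf li]; last first.
  by rewrite mxE enum_rankK_in // li mulr0.
by rewrite mxE enum_rankK_in // eqxx mulr1 addr0.
Qed.

Lemma exists_codeword_vanishing_listed k N (G : 'M[F]_(k, N)) s t :
  (size s + (N - t) < \rank G)%N ->
  exists x : 'rV[F]_N,
    [/\ x != 0, (x <= G)%MS & {in listed_or_beyond N s t, forall i, x 0 i = 0}].
Proof.
by move=> sG; apply: exists_codeword_vanishing_on;
  exact: leq_ltn_trans (card_listed_or_beyond _ _ _) sG.
Qed.

Lemma exists_comb_vanishing_at N (c1 c2 : 'rV[F]_N) (p q : 'I_N) :
  c1 != 0 -> c1 0 q = 0 -> c2 0 q != 0 ->
  exists u v : F, u *: c1 + v *: c2 != 0 /\ (u *: c1 + v *: c2) 0 p = 0.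
Proof.
move=> c1_neq0 c1q c2q; have [c1p | c1p] := eqVneq (c1 0 p) 0.
  by exists 1, 0; rewrite scale1r scale0r addr0.
exists (c2 0 p), (- c1 0 p); split; last by rewrite !mxE mulNr mulrC subrr.
apply/row_neq0P; exists q.
by rewrite !mxE c1q mulr0 add0r mulNr oppr_eq0 mulf_neq0.
Qed.

Lemma tensmx_rowE m n (x : 'rV[F]_m) (y : 'rV[F]_n) i j :
  (x *t y) 0 (mxtens_index (i, j)) = x 0 i * y 0 j.
Proof. by rewrite mxE mxtens_indexK !ord1. Qed.

Lemma tensmx_row_neq0 m n (x : 'rV[F]_m) (y : 'rV[F]_n) :
  x != 0 -> y != 0 -> x *t y != 0.
Proof.
move=> /row_neq0P[i xi] /row_neq0P[j yj]; apply/row_neq0P.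
by exists (mxtens_index (i, j)); rewrite tensmx_rowE mulf_neq0.
Qed.

Lemma tensmx_sub k1 k2 m n (G1 : 'M[F]_(k1, m)) (G2 : 'M[F]_(k2, n))
    (x : 'rV[F]_m) (y : 'rV[F]_n) :
  (x <= G1)%MS -> (y <= G2)%MS -> (x *t y <= G1 *t G2)%MS.
Proof. by case/submxP=> u ->; case/submxP=> w ->; rewrite -tensmx_mul submxMl. Qed.

Definition supported_in m n (c : 'rV[F]_(m * n)) (E : {set 'I_m * 'I_n}) : Prop :=
  forall i j, (i, j) \notin E -> c 0 (mxtens_index (i, j)) = 0.

Lemma tensmx_supported_in m n (x : 'rV[F]_m) (y : 'rV[F]_n)
    (Z1 : {set 'I_m}) (Z2 : {set 'I_n}) (E : {set 'I_m * 'I_n}) :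
  {in Z1, forall i, x 0 i = 0} -> {in Z2, forall j, y 0 j = 0} ->
  (forall i j, (i, j) \notin E -> (i \in Z1) || (j \in Z2)) ->
  supported_in (x *t y) E.
Proof.
move=> xZ yZ EZ i j /EZ /orP[iZ | jZ]; rewrite tensmx_rowE.
  by rewrite xZ ?mul0r.
by rewrite yZ ?mulr0.
Qed.

Lemma supported_in_comb m n (c1 c2 : 'rV[F]_(m * n)) (E : {set 'I_m * 'I_n}) u v :
  supported_in c1 E -> supported_in c2 E -> supported_in (u *: c1 + v *: c2) E.
Proof. by move=> c1E c2E i j ijE; rewrite !mxE c1E ?c2E // !mulr0 addr0. Qed.

Lemma supported_in_setU1 m n (c : 'rV[F]_(m * n)) p (E : {set 'I_m * 'I_n}) :
  supported_in c (p |: E) -> c 0 (mxtens_index p) = 0 -> supported_in c E.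
Proof.
move=> cpE cp i j ijE; have [-> // | ijp] := eqVneq (i, j) p.
by apply: cpE; rewrite !inE negb_or ijp.
Qed.

Lemma not_corrects_supported k m n (G : 'M[F]_(k, m * n)) (E : {set 'I_m * 'I_n}) c :
  c != 0 -> (c <= G)%MS -> supported_in c E -> ~ corrects G E.
Proof.
move=> c_neq0 cG cE G_E; move/eqP: c_neq0; apply.
by apply: G_E => // [|i j /cE ->]; rewrite ?sub0mx ?mxE.
Qed.

End Codewords.

Section PatternCodeword.

Variables (F : fieldType) (a b m n k1 k2 : nat).
Variables (G1 : 'M[F]_(k1, m)) (G2 : 'M[F]_(k2, n)).
Hypotheses (am : (a + 3 <= m)%N) (bn : (b + 3 <= n)%N).
Hypotheses (rkG1 : (m - a <= \rank G1)%N) (rkG2 : (n - b <= \rank G2)%N).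

Let E := pattern a b m n.

Lemma exists_row_codeword (p q : nat) :
  exists x : 'rV[F]_m, [/\ x != 0, (x <= G1)%MS &
    {in listed_or_beyond m [:: p; q] (a + 3), forall i, x 0 i = 0}].
Proof. by apply: exists_codeword_vanishing_listed => /=; lia. Qed.

Lemma exists_col_codeword (p q : nat) :
  exists y : 'rV[F]_n, [/\ y != 0, (y <= G2)%MS &
    {in listed_or_beyond n [:: p; q] (b + 3), forall j, y 0 j = 0}].
Proof. by apply: exists_codeword_vanishing_listed => /=; lia. Qed.

Lemma pattern_codeword_narrow (y : 'rV[F]_n) :
  y != 0 -> (y <= G2)%MS ->
  {in listed_or_beyond n [:: 0; 1; 3; 4] (b + 3), forall j, y 0 j = 0} ->
  exists c, [/\ c != 0, (c <= G1 *t G2)%MS & supported_in c E].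
Proof.
move=> y_neq0 yG yZ; have [x [x_neq0 xG xZ]] := exists_row_codeword 2 2.
exists (x *t y); split; [exact: tensmx_row_neq0 | exact: tensmx_sub |].
by apply: tensmx_supported_in xZ yZ _ => i j /notin_pattern[].
Qed.

Lemma pattern_codeword_wide (y' : 'rV[F]_n) (j0 : 'I_n) :
  (y' <= G2)%MS -> {in listed_or_beyond n [:: 0; 1] (b + 3), forall j, y' 0 j = 0} ->
  val j0 \in [:: 3; 4] -> y' 0 j0 != 0 ->
  exists c, [/\ c != 0, (c <= G1 *t G2)%MS & supported_in c E].
Proof.
(* x *t y and x' *t y' are supported in the pattern plus the cell (2, 2); a
   combination cancelling that cell survives at (i0, j0), where y vanishes
   but y' does not. *)
move=> y'G y'Z j0_34 y'j0.
have [x [x_neq0 xG xZ]] := exists_row_codeword 3 4.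
have [y [y_neq0 yG yZ]] := exists_col_codeword 3 4.
have [x' [/row_neq0P[i0 x'i0] x'G x'Z]] := exists_row_codeword 0 1.
pose p : 'I_m * 'I_n :=
  (Ordinal (leq_trans (leq_addl a 3) am), Ordinal (leq_trans (leq_addl b 3) bn)).
have off_p i j :
    (i, j) \notin p |: E -> (i, j) \notin E /\ ~~ ((val i == 2) && (val j == 2)).
  by rewrite !inE negb_or xpair_eqE -!val_eqE => /andP[].
have xyE : supported_in (x *t y) (p |: E).
  by apply: tensmx_supported_in xZ yZ _ => i j /off_p[/notin_pattern[_ + _]]; apply.
have x'y'E : supported_in (x' *t y') (p |: E).
  by apply: tensmx_supported_in x'Z y'Z _ => i j /off_p[/notin_pattern[_ _ +]]; apply.
have [||u [v [c_neq0 cp]]] := exists_comb_vanishing_at (mxtens_index p)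
  (tensmx_row_neq0 x_neq0 y_neq0) (q := mxtens_index (i0, j0)) (c2 := x' *t y').
- by rewrite tensmx_rowE yZ ?mulr0 // inE j0_34.
- by rewrite tensmx_rowE mulf_neq0.
exists (u *: (x *t y) + v *: (x' *t y')); split => //.
  by rewrite addmx_sub ?scalemx_sub ?tensmx_sub.
by apply: supported_in_setU1 cp; apply: supported_in_comb.
Qed.

Lemma pattern_codeword :
  exists c, [/\ c != 0, (c <= G1 *t G2)%MS & supported_in c E].
Proof.
have [y' [y'_neq0 y'G y'Z]] := exists_col_codeword 0 1.
case: (boolP [forall j : 'I_n, (val j \in [:: 3; 4]) ==> (y' 0 j == 0)]).
  move=> /forallP y'34; apply: pattern_codeword_narrow y'_neq0 y'G _ => j.
  have [j34 _ | j34 j_off] := boolP (val j \in [:: 3; 4]).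
    exact/eqP/(implyP (y'34 j)).
  by apply: y'Z; move: j34 j_off; rewrite !inE /=; lia.
by case/forallPn=> j0; rewrite negb_imply => /andP[]; apply: pattern_codeword_wide.
Qed.

End PatternCodeword.

Lemma pattern_not_correctable a b m n :
  (a + 3 <= m)%N -> (b + 3 <= n)%N -> ~ correctable a b (pattern a b m n).
Proof.
move=> am bn [F [k1 [k2 [G1 [G2 [rkG1 rkG2 G_E]]]]]].
have [c [c_neq0 cG cE]] := pattern_codeword am bn rkG1 rkG2.
exact: not_corrects_supported c_neq0 cG cE G_E.
Qed.

Theorem theorem4 (a b : nat) :
  (2 <= a)%N -> (2 <= b)%N ->
  forall m n : nat, (a + 3 <= m)%N -> (b + 3 <= n)%N ->
  exists E : {set 'I_m * 'I_n}, regular a b E /\ ~ correctable a b E.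
Proof.
move=> a2 b2 m n am bn; exists (pattern a b m n).
by split; [apply: pattern_regular | apply: pattern_not_correctable].
Qed.
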